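(* Let $n\in\mathbb{N}$, let $X$ be a non-empty perfect Polish space, let $\pi$ be a balanced scheme of size $n$, and let $\mathcal{V}\subseteq\mathcal{U}(\pi)$ be a non-empty open subset of $\mathcal{K}(X)$. Then there exists a balanced scheme $\pi'$ of size $n+1$ which is consistent with $\pi$ and satisfies $\mathcal{U}(\pi')\subseteq\mathcal{V}$.
   Context: $\mathcal{K}(X)$ is the space of non-empty compact subsets of $X$ with the Hausdorff metric. Fix an onto map $\Psi$ from the positive odd integers to the set $\mathbb{N}^{<\omega}$ of finite sequences of natural numbers such that $\Psi(m)$ has at most $m$ coordinates for every odd $m$. Given positive integers $a_1,a_2,\dots$, let $\mathcal{I}_m=\prod_{k=1}^m\{1,\dots,a_k\}$. For $n\ge1$ and $(a_1,\dots,a_{2n-1})$ define $\Phi=\Phi_{a_1\dots a_{2n-1}}$ on $\{2k-1:1\le k\le n\}$ by $\Phi(2k-1)=\Psi(2k-1)$ if $\Psi(2k-1)\in\bigcup_{m=1}^{2k-1}\mathcal{I}_m$, and $\Phi(2k-1)=(1)\in\mathcal{I}_1$ otherwise. For $n\ge1$, a balanced scheme of size $n$ is a pair consisting of positive integers $(a_1,\dots,a_{2n})$ and non-empty open sets $U_{i_1\dots i_k}\subseteq X$ for $(i_1,\dots,i_k)\in\mathcal{I}_k$, $1\le k\le 2n$, such that there are positive reals $b_k$ with: (1) $a_1\ge2$ and $a_k\ge(k-1)a_1\cdots a_{k-1}$ for $2\le k\le 2n$; (2) $\overline{U_{i_1\dots i_k}}\subseteq U_{i_1\dots i_{k-1}}$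 for $2\le k\le 2n$; (3) $\operatorname{diam}U_{i_1\dots i_k}\le b_k$ for $1\le k\le 2n$; (4) $\operatorname{dist}(U_{i_1\dots i_k},U_{j_1\dots j_k})>2b_k$ whenever $(i_1,\dots,i_k)\ne(j_1,\dots,j_k)\in\mathcal{I}_k$, $1\le k\le 2n$; (5) with $\Phi=\Phi_{a_1\dots a_{2n-1}}$: if $k<2n$ is odd, $U_{i_1\dots i_k}\subseteq U_{\Phi(k)}$ and $U_{j_1\dots j_k}\not\subseteq U_{\Phi(k)}$, then for all $s\ne t$ in $\{1,\dots,a_{k+1}\}$, $\operatorname{dist}(U_{i_1\dots i_k s},U_{i_1\dots i_k t})>\operatorname{diam}\bigl(\bigcup_{j_{k+1}=1}^{a_{k+1}}U_{j_1\dots j_k j_{k+1}}\bigr)$. The balanced scheme of size $0$ is $(\emptyset,\emptyset)$. For a balanced scheme $\pi$ of size $n\ge1$, $\mathcal{U}(\pi)=\{K\in\mathcal{K}(X): K\subseteq\bigcup_{(i_1,\dots,i_{2n})\in\mathcal{I}_{2n}}U_{i_1\dots i_{2n}}$ and $K\cap U_{i_1\dots i_{2n}}\ne\emptyset$ for all $(i_1,\dots,i_{2n})\in\mathcal{I}_{2n}\}$; for size $0$, $\mathcal{U}(\pi)=\mathcal{K}(X)$. A balanced scheme $\pi'$ of size $n+1$ is consistent with a balanced scheme $\pi$ of size $n$ if $a_k(\pi')=a_k(\pi)$ and $U_{i_1\dots i_k}(\pi')=U_{i_1\dots i_k}(\pi)$ for all $k\le 2n$ and $(i_1,\dots,i_k)\in\mathcal{I}_k$.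 *)

From Stdlib Require Import Reals List Arith Bool.
Import ListNotations.
Open Scope R_scope.
Local Open Scope bool_scope.

Section Metric.
Variable X : Type.
Variable d : X -> X -> R.

Definition is_metric : Prop :=
  (forall x y, 0 <= d x y) /\ (forall x y, d x y = 0 <-> x = y) /\
  (forall x y, d x y = d y x) /\ (forall x y z, d x z <= d x y + d y z).

Definition open (A : X -> Prop) : Prop :=
  forall x, A x -> exists eps, 0 < eps /\ forall y, d x y < eps -> A y.

Definition closure (A : X -> Prop) (x : X) : Prop :=
  forall eps, 0 < eps -> exists y, A y /\ d x y < eps.

Definition subset (A B : X -> Prop) : Prop := forall x, A x -> B x.

Definition diam_le (A : X -> Prop) (r : R) : Prop :=
  forall x y, A x -> A y -> d x y <= r.

(* dist(A,B) = inf { d x y | x in A, y in B } > r *)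
Definition dist_gt (A B : X -> Prop) (r : R) : Prop :=
  exists c, r < c /\ forall x y, A x -> B y -> c <= d x y.

Definition cauchy (u : nat -> X) : Prop :=
  forall eps, 0 < eps -> exists N, forall p q, (N <= p)%nat -> (N <= q)%nat -> d (u p) (u q) < eps.

Definition complete : Prop :=
  forall u, cauchy u -> exists l, forall eps, 0 < eps -> exists N, forall p, (N <= p)%nat -> d (u p) l < eps.

Definition separable : Prop :=
  exists D : nat -> X, forall x eps, 0 < eps -> exists k, d x (D k) < eps.

Definition perfect : Prop :=
  forall x eps, 0 < eps -> exists y, y <> x /\ d x y < eps.

Definition compact (K : X -> Prop) : Prop :=
  forall (I : Type) (F : I -> X -> Prop), (forall i, open (F i)) ->
    (forall x, K x -> exists i, F i x) ->
    exists l : list I, forall x, K x -> exists i, In i l /\ F i x.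

Definition isK (K : X -> Prop) : Prop := (exists x, K x) /\ compact K.

(* Hausdorff distance d_H(K,L) < eps (for compact K, L the infima are attained) *)
Definition hball (K : X -> Prop) (eps : R) (L : X -> Prop) : Prop :=
  exists r, r < eps /\
    (forall x, K x -> exists y, L y /\ d x y <= r) /\
    (forall y, L y -> exists x, K x /\ d x y <= r).

Definition Kopen (V : (X -> Prop) -> Prop) : Prop :=
  forall K, V K -> isK K /\
    exists eps, 0 < eps /\ forall L, isK L -> hball K eps L -> V L.
End Metric.

(* ---- index sets I_m = prod_{j=1}^m {1,...,a_j}, indices are lists ---- *)
Definition inI (a : nat -> nat) (k : nat) (s : list nat) : Prop :=
  length s = k /\ forall j, (j < k)%nat -> (1 <= nth j s 0 <= a (S j))%nat.

Fixpoint inIb_from (a : nat -> nat) (j : nat) (s : list nat) : bool :=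
  match s with
  | [] => true
  | x :: s' => (1 <=? x) && (x <=? a j) && inIb_from a (S j) s'
  end.

Fixpoint prodA (a : nat -> nat) (m : nat) : nat :=
  match m with 0 => 1 | S m' => prodA a m' * a m end.

(* Phi_{a_1...a_{2n-1}}(k) for odd k: Psi(k) if Psi(k) lies in the union of
   I_1,...,I_k, and (1) otherwise *)
Definition Phi (Psi : nat -> list nat) (a : nat -> nat) (k : nat) : list nat :=
  let s := Psi k in
  if (1 <=? length s) && (length s <=? k) && inIb_from a 1 s then s else [1%nat].

(* balanced scheme of size n: (a_1..a_{2n}) given by a, open sets by U *)
Definition balanced (X : Type) (d : X -> X -> R) (Psi : nat -> list nat)
  (n : nat) (a : nat -> nat) (U : list nat -> X -> Prop) : Prop :=
  n = 0%nat \/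
  ((1 <= n)%nat /\
   (forall k, (1 <= k <= 2 * n)%nat -> (1 <= a k)%nat) /\
   (forall k s, (1 <= k <= 2 * n)%nat -> inI a k s ->
      open X d (U s) /\ exists x, U s x) /\
   exists b : nat -> R,
     (forall k, (1 <= k <= 2 * n)%nat -> 0 < b k) /\
     (2 <= a 1%nat)%nat /\
     (forall k, (2 <= k <= 2 * n)%nat -> ((k - 1) * prodA a (k - 1) <= a k)%nat) /\
     (forall k s, (2 <= k <= 2 * n)%nat -> inI a k s ->
        subset X (closure X d (U s)) (U (removelast s))) /\
     (forall k s, (1 <= k <= 2 * n)%nat -> inI a k s -> diam_le X d (U s) (b k)) /\
     (forall k s t, (1 <= k <= 2 * n)%nat -> inI a k s -> inI a k t -> s <> t ->
        dist_gt X d (U s) (U t) (2 * b k)) /\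
     (forall k i j, (k < 2 * n)%nat -> Nat.odd k = true -> inI a k i -> inI a k j ->
        subset X (U i) (U (Phi Psi a k)) -> ~ subset X (U j) (U (Phi Psi a k)) ->
        forall s t, (1 <= s <= a (S k))%nat -> (1 <= t <= a (S k))%nat -> s <> t ->
        exists r,
          diam_le X d (fun x => exists u, (1 <= u <= a (S k))%nat /\ U (j ++ [u]) x) r /\
          dist_gt X d (U (i ++ [s])) (U (i ++ [t])) r)).

Definition Upi (X : Type) (d : X -> X -> R) (n : nat) (a : nat -> nat)
  (U : list nat -> X -> Prop) (K : X -> Prop) : Prop :=
  isK X d K /\
  (n = 0%nat \/
   ((forall x, K x -> exists i, inI a (2 * n) i /\ U i x) /\
    (forall i, inI a (2 * n) i -> exists x, K x /\ U i x))).

Definition consistent (X : Type) (n : nat) (a : nat -> nat) (U : list nat -> X -> Prop)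
  (a' : nat -> nat) (U' : list nat -> X -> Prop) : Prop :=
  (forall k, (1 <= k <= 2 * n)%nat -> a' k = a k) /\
  (forall k s, (1 <= k <= 2 * n)%nat -> inI a k s -> forall x, U' s x <-> U s x).

From Stdlib Require Import Reals List Lra Lia Classical ClassicalEpsilon.
Import ListNotations.
Open Scope R_scope.

(* Pick K0 in V and eps such that the Hausdorff eps-ball around K0 lies in V, and
   let del = eps/4.  Level 2n+1 puts A small balls into every cell of level 2n,
   centered near points of K0 (near every point of a finite del-net of K0 lying in
   that cell); level 2n+2 puts B tiny balls into every cell of level 2n+1.  Since X
   is perfect, any number of distinct, hence uniformly separated, centers exist
   near a point; finiteness of the index sets I_k makes all radii uniform.
   Condition (5) at level 2n+1 is obtained with two scales: the children of cells
   inside U_Phi(2n+1) are spread sigma apart, all other children cluster within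
   sigma/16 of their parent's center.  Every cell of level 2n+2 is then within
   3 del of K0 and vice versa, so every K in U(pi') is eps-close to K0. *)

Lemma inI_snoc a k s u :
  inI a k s -> (1 <= u <= a (S k))%nat -> inI a (S k) (s ++ [u]).
Proof.
  intros [Hlen Hs] Hu. split.
  - rewrite length_app; simpl; lia.
  - intros j Hj. destruct (Nat.lt_ge_cases j k).
    + rewrite app_nth1 by lia. apply Hs; lia.
    + replace j with k by lia. rewrite app_nth2, Hlen, Nat.sub_diag by lia. exact Hu.
Qed.

Lemma inI_split a k t :
  inI a (S k) t -> exists s u, t = s ++ [u] /\ inI a k s /\ (1 <= u <= a (S k))%nat.
Proof.
  intros [Hlen Ht].
  assert (Hne : t <> []) by (intros ->; discriminate).
  pose proof (app_removelast_last 0%nat Hne) as Et.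
  assert (Hlen' : length (removelast t) = k).
  { rewrite Et, length_app in Hlen; simpl in Hlen; lia. }
  exists (removelast t), (last t 0%nat). split; [exact Et|]. split; [split; [exact Hlen'|]|].
  - intros j Hj. specialize (Ht j ltac:(lia)). rewrite Et, app_nth1 in Ht by lia. exact Ht.
  - specialize (Ht k ltac:(lia)). rewrite Et, app_nth2, Hlen', Nat.sub_diag in Ht by lia. exact Ht.
Qed.

Lemma inI_nil a s : inI a 0 s -> s = [].
Proof. intros [Hlen _]. destruct s; [reflexivity | discriminate]. Qed.

Lemma inI_ext a a' k s :
  (forall j, (j <= k)%nat -> a' j = a j) -> inI a k s -> inI a' k s.
Proof. intros Ha [Hlen Hs]. split; [exact Hlen|]. intros j Hj. rewrite Ha by lia. auto. Qed.

Lemma prodA_ext a a' k :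
  (forall j, (j <= k)%nat -> a' j = a j) -> prodA a' k = prodA a k.
Proof.
  induction k as [|k IH]; intros Ha; simpl; [reflexivity|].
  rewrite IH by (intros; apply Ha; lia). rewrite Ha by lia. reflexivity.
Qed.

Lemma inIb_from_ext a a' j s :
  (forall i, (j <= i < j + length s)%nat -> a' i = a i) -> inIb_from a' j s = inIb_from a j s.
Proof.
  revert j; induction s as [|x s IH]; intros j Ha; simpl; [reflexivity|].
  rewrite Ha by (simpl; lia). rewrite IH; [reflexivity|]. intros i Hi; apply Ha; simpl; lia.
Qed.

Lemma Phi_ext Psi a a' k :
  (forall j, (j <= k)%nat -> a' j = a j) -> Phi Psi a' k = Phi Psi a k.
Proof.
  intros Ha. unfold Phi. destruct (length (Psi k) <=? k)%nat eqn:E.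
  - apply Nat.leb_le in E. rewrite (inIb_from_ext a a'); [reflexivity|]. intros; apply Ha; lia.
  - rewrite !Bool.andb_false_r. reflexivity.
Qed.

Lemma Phi_length Psi a k : (1 <= k)%nat -> (length (Phi Psi a k) <= k)%nat.
Proof.
  intros Hk. unfold Phi.
  destruct ((1 <=? length (Psi k)) && (length (Psi k) <=? k) && inIb_from a 1 (Psi k))%bool eqn:E.
  - apply andb_prop in E as [E _]. apply andb_prop in E as [_ E]. apply Nat.leb_le, E.
  - simpl; lia.
Qed.

Definition listable {T : Type} (F : T -> Prop) : Prop :=
  exists l : list T, forall x, F x -> In x l.

Definition down_closed {T : Type} (Q : T -> R -> Prop) : Prop :=
  forall x e e', 0 < e' -> e' <= e -> Q x e -> Q x e'.

Lemma uniform_bound {T : Type} (F : T -> Prop) (Q : T -> R -> Prop) :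
  listable F -> down_closed Q -> (forall x, F x -> exists e, 0 < e /\ Q x e) ->
  exists e, 0 < e /\ forall x, F x -> Q x e.
Proof.
  intros [l Hl] HQ Hpos.
  assert (Hlist : exists e, 0 < e /\ forall x, In x l -> F x -> Q x e).
  { clear Hl. induction l as [|y l [e [He IH]]].
    - exists 1. split; [lra | intros x []].
    - destruct (classic (F y)) as [Fy|nFy].
      + destruct (Hpos y Fy) as [e' [He' Qy]].
        exists (Rmin e e'). split; [apply Rmin_pos; auto|].
        intros x [Ex|Hx] Fx; [subst x|].
        * apply (HQ y e'); auto using Rmin_r. apply Rmin_pos; auto.
        * apply (HQ x e); auto using Rmin_l. apply Rmin_pos; auto.
      + exists e. split; [exact He|]. intros x [Ex|Hx] Fx; [subst x; contradiction | auto]. }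
  destruct Hlist as [e [He H]]. exists e. split; auto.
Qed.

Lemma listable_range N : listable (fun u => (1 <= u <= N)%nat).
Proof. exists (seq 1 N). intros u Hu. apply in_seq. lia. Qed.

Lemma listable_inI a k : listable (inI a k).
Proof.
  induction k as [|k [l Hl]].
  - exists [[]]. intros s Hs. rewrite (inI_nil a s Hs). left; reflexivity.
  - exists (flat_map (fun s => map (fun u => s ++ [u]) (seq 1 (a (S k)))) l).
    intros t Ht. destruct (inI_split a k t Ht) as [s [u [-> [Hs Hu]]]].
    apply in_flat_map. exists s. split; [auto|]. apply (in_map (fun u => s ++ [u])), in_seq. lia.
Qed.

Lemma listable_pair {A B : Type} (F : A -> Prop) (G : B -> Prop) :
  listable F -> listable G -> listable (fun p : A * B => F (fst p) /\ G (snd p)).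
Proof.
  intros [l Hl] [m Hm]. exists (list_prod l m). intros [x y] [Fx Gy]. apply in_prod; auto.
Qed.

Section MetricFacts.
Variable X : Type.
Variable d : X -> X -> R.
Hypothesis Hm : is_metric X d.

Lemma d_nonneg x y : 0 <= d x y. Proof. apply (proj1 Hm). Qed.
Lemma d_sym x y : d x y = d y x. Proof. apply (proj1 (proj2 (proj2 Hm))). Qed.
Lemma d_tri x y z : d x z <= d x y + d y z. Proof. apply (proj2 (proj2 (proj2 Hm))). Qed.
Lemma d_refl x : d x x = 0. Proof. apply (proj1 (proj2 Hm)); reflexivity. Qed.

Lemma d_pos x y : x <> y -> 0 < d x y.
Proof.
  intros Hxy. destruct (Rle_lt_or_eq_dec 0 (d x y) (d_nonneg x y)) as [H|H]; [exact H|].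
  exfalso; apply Hxy, (proj1 (proj2 Hm)); auto.
Qed.

Definition ball (c : X) (r : R) : X -> Prop := fun y => d c y < r.

Lemma ball_center c r : 0 < r -> ball c r c.
Proof. intros Hr. unfold ball. rewrite d_refl. exact Hr. Qed.

Lemma ball_open c r : open X d (ball c r).
Proof.
  intros x Hx. exists (r - d c x). unfold ball in *. split; [lra|].
  intros y Hy. pose proof (d_tri c x y). lra.
Qed.

Lemma ball_diam c r : diam_le X d (ball c r) (2 * r).
Proof.
  intros x y Hx Hy. unfold ball in *. pose proof (d_tri x c y). rewrite (d_sym x c) in *. lra.
Qed.

Lemma closure_ball c r x : closure X d (ball c r) x -> d c x <= r.
Proof.
  intros Hx. destruct (Rle_or_lt (d c x) r) as [H|H]; [exact H|].
  destruct (Hx (d c x - r)) as [y [Hy Hxy]]; [lra|]. unfold ball in Hy.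
  pose proof (d_tri c y x). rewrite (d_sym y x) in *. lra.
Qed.

Lemma ball_dist_gt c c' r r' : r' < d c c' - 2 * r -> dist_gt X d (ball c r) (ball c' r) r'.
Proof.
  intros H. exists (d c c' - 2 * r). split; [exact H|].
  intros x y Hx Hy. unfold ball in *.
  pose proof (d_tri c x c'). pose proof (d_tri x y c'). rewrite (d_sym y c') in *. lra.
Qed.

Lemma dist_gt_mono (A B A' B' : X -> Prop) r r' :
  subset X A A' -> subset X B B' -> dist_gt X d A' B' r -> r' <= r -> dist_gt X d A B r'.
Proof. intros HA HB [c [Hc H]] Hr. exists c. split; [lra|]. intros; apply H; auto. Qed.

Lemma cluster_vs_gap (q : nat -> X) (N : nat) (z p p' : X) sigma r :
  0 <= r <= sigma / 16 -> sigma < d p p' ->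
  (forall u, (1 <= u <= N)%nat -> d z (q u) <= sigma / 16) ->
  diam_le X d (fun x => exists u, (1 <= u <= N)%nat /\ ball (q u) r x) (sigma / 4) /\
  dist_gt X d (ball p r) (ball p' r) (sigma / 4).
Proof.
  intros Hr Hpp' Hq. split.
  - intros x y [u [Hu Hx]] [w [Hw Hy]]. unfold ball in Hx, Hy.
    pose proof (Hq u Hu). pose proof (Hq w Hw).
    pose proof (d_tri x (q u) y). pose proof (d_tri (q u) z y). pose proof (d_tri z (q w) y).
    rewrite (d_sym x (q u)), (d_sym (q u) z) in *. lra.
  - apply ball_dist_gt. lra.
Qed.

Lemma finite_net (K : X -> Prop) delta :
  isK X d K -> 0 < delta ->
  exists (m : nat) (z : nat -> X), (forall j, (1 <= j <= m)%nat -> K (z j)) /\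
    forall x, K x -> exists j, (1 <= j <= m)%nat /\ d (z j) x < delta.
Proof.
  intros [[x0 Kx0] Hcpt] Hdelta.
  destruct (Hcpt {p | K p} (fun p => ball (proj1_sig p) delta)) as [l Hl].
  - intros p. apply ball_open.
  - intros x Kx. exists (exist _ x Kx). apply ball_center, Hdelta.
  - exists (length (map (@proj1_sig _ _) l)), (fun j => nth (j - 1) (map (@proj1_sig _ _) l) x0).
    split.
    + intros j Hj. assert (Hin : In (nth (j - 1) (map (@proj1_sig _ _) l) x0) (map (@proj1_sig _ _) l))
        by (apply nth_In; lia).
      apply in_map_iff in Hin as [[p Kp] [Ep _]]. simpl in Ep. rewrite <- Ep. exact Kp.
    + intros x Kx. destruct (Hl x Kx) as [p [Hp Hpx]].
      apply (in_map (@proj1_sig _ _)) in Hp.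
      destruct (In_nth _ _ x0 Hp) as [j [Hj Ej]]. exists (S j). split; [lia|].
      replace (S j - 1)%nat with j by lia. rewrite Ej. exact Hpx.
Qed.

Hypothesis Hperf : perfect X d.

Lemma avoid_finite (C : list X) p rho :
  0 < rho -> exists y, d p y < rho /\ ~ In y C.
Proof.
  intros Hrho.
  destruct (uniform_bound (fun c => In c C /\ c <> p) (fun c e => e < d p c)) as [eta [Heta Hfar]].
  - exists C. intros c [Hc _]. exact Hc.
  - intros c e e' _ He' He. lra.
  - intros c [_ Hcp]. exists (d p c / 2). pose proof (d_pos p c (fun E => Hcp (eq_sym E))). split; lra.
  - destruct (Hperf p (Rmin eta rho)) as [y [Hyp Hy]]; [apply Rmin_pos; auto|].
    exists y. split; [pose proof (Rmin_r eta rho); lra|].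
    intros Hin. pose proof (Hfar y (conj Hin Hyp)).
    pose proof (Rmin_l eta rho). lra.
Qed.

Lemma scattered_points (p : nat -> X) rho N :
  0 < rho -> exists (f : nat -> X) sigma, 0 < sigma /\
    (forall u, (1 <= u <= N)%nat -> d (p u) (f u) < rho) /\
    (forall u u', (1 <= u <= N)%nat -> (1 <= u' <= N)%nat -> u <> u' -> sigma < d (f u) (f u')).
Proof.
  intros Hrho. induction N as [|N [f [sigma [Hsigma [Hclose Hsep]]]]].
  - exists p, 1. repeat split; intros; lia || lra.
  - destruct (avoid_finite (map f (seq 1 N)) (p (S N)) rho Hrho) as [y [Hy Hnew]].
    destruct (uniform_bound (fun u => (1 <= u <= N)%nat) (fun u e => e < d y (f u)))
      as [eta [Heta Hfar]].
    + apply listable_range.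
    + intros u e e' _ He' He. lra.
    + intros u Hu. exists (d y (f u) / 2).
      assert (Hyf : y <> f u) by (intros ->; apply Hnew, in_map, in_seq; lia).
      pose proof (d_pos y (f u) Hyf). split; lra.
    + exists (fun u => if (u =? S N)%nat then y else f u), (Rmin sigma eta).
      split; [apply Rmin_pos; auto|]. split.
      * intros u Hu. destruct (Nat.eqb_spec u (S N)) as [->|]; [exact Hy | apply Hclose; lia].
      * pose proof (Rmin_l sigma eta). pose proof (Rmin_r sigma eta).
        intros u u' Hu Hu' Huu'.
        destruct (Nat.eqb_spec u (S N)), (Nat.eqb_spec u' (S N)); try lia.
        -- pose proof (Hfar u' ltac:(lia)). lra.
        -- pose proof (Hfar u ltac:(lia)). rewrite d_sym. lra.
        -- pose proof (Hsep u u' ltac:(lia) ltac:(lia) Huu'). lra.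
Qed.

Lemma scattered_family (F : list nat -> Prop) (p : list nat -> nat -> X) rho N :
  listable F -> 0 < rho ->
  exists (f : list nat -> nat -> X) sigma, 0 < sigma /\ forall s, F s ->
    (forall u, (1 <= u <= N)%nat -> d (p s u) (f s u) < rho) /\
    (forall u u', (1 <= u <= N)%nat -> (1 <= u' <= N)%nat -> u <> u' ->
       sigma < d (f s u) (f s u')).
Proof.
  intros HF Hrho.
  destruct (choice (fun s (fs : (nat -> X) * R) => 0 < snd fs /\
      (forall u, (1 <= u <= N)%nat -> d (p s u) (fst fs u) < rho) /\
      (forall u u', (1 <= u <= N)%nat -> (1 <= u' <= N)%nat -> u <> u' ->
         snd fs < d (fst fs u) (fst fs u')))) as [fs Hfs].
  { intros s. destruct (scattered_points (p s) rho N Hrho) as [f [sigma Hf]].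
    exists (f, sigma). exact Hf. }
  destruct (uniform_bound F (fun s e => forall u u', (1 <= u <= N)%nat -> (1 <= u' <= N)%nat ->
      u <> u' -> e < d (fst (fs s) u) (fst (fs s) u'))) as [sigma [Hsigma Hsep]].
  - exact HF.
  - intros s e e' _ He' He u u' Hu Hu' Huu'. specialize (He u u' Hu Hu' Huu'). lra.
  - intros s _. exists (snd (fs s)). destruct (Hfs s) as [H1 [_ H3]]. split; auto.
  - exists (fun s => fst (fs s)), sigma. split; [exact Hsigma|].
    intros s Fs. split; [apply (Hfs s) | apply Hsep, Fs].
Qed.
End MetricFacts.

Section Levels.
Variable X : Type.
Variable d : X -> X -> R.
Variable Psi : nat -> list nat.

Definition level_ok (a : nat -> nat) (U : list nat -> X -> Prop) (b : nat -> R) (k : nat) : Prop :=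
  (1 <= a k)%nat /\ (k = 1%nat -> (2 <= a k)%nat) /\ ((k - 1) * prodA a (k - 1) <= a k)%nat /\
  0 < b k /\
  (forall s, inI a k s ->
     open X d (U s) /\ (exists x, U s x) /\ diam_le X d (U s) (b k) /\
     ((2 <= k)%nat -> subset X (closure X d (U s)) (U (removelast s)))) /\
  (forall s t, inI a k s -> inI a k t -> s <> t -> dist_gt X d (U s) (U t) (2 * b k)).

Definition gap_condition (a : nat -> nat) (U : list nat -> X -> Prop) (k : nat) : Prop :=
  forall i j, inI a k i -> inI a k j ->
    subset X (U i) (U (Phi Psi a k)) -> ~ subset X (U j) (U (Phi Psi a k)) ->
    forall s t, (1 <= s <= a (S k))%nat -> (1 <= t <= a (S k))%nat -> s <> t ->
    exists r,
      diam_le X d (fun x => exists u, (1 <= u <= a (S k))%nat /\ U (j ++ [u]) x) r /\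
      dist_gt X d (U (i ++ [s])) (U (i ++ [t])) r.

Lemma balanced_levels n a U :
  balanced X d Psi n a U ->
  exists b, 0 < b (2 * n)%nat /\ (forall k, (1 <= k <= 2 * n)%nat -> level_ok a U b k) /\
    forall k, (k < 2 * n)%nat -> Nat.odd k = true -> gap_condition a U k.
Proof.
  intros [->|[Hn [Ha [HU [b [Hb [Ha1 [Hgrow [Hnest [Hdiam [Hsep Hgap]]]]]]]]]]].
  - exists (fun _ => 1). split; [lra|]. split; intros; lia.
  - exists b. split; [apply Hb; lia|]. split; [|intros k Hk Hodd i j; apply Hgap; auto].
    intros k Hk. split; [apply Ha, Hk|]. split; [intros ->; exact Ha1|].
    split; [destruct (Nat.le_gt_cases k 1); [nia | apply Hgrow; lia]|].
    split; [apply Hb, Hk|]. split.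
    + intros s Hs. destruct (HU k s Hk Hs) as [Hopen Hne].
      split; [exact Hopen|]. split; [exact Hne|]. split; [apply Hdiam; auto|].
      intros Hk2. apply (Hnest k); auto; lia.
    + intros s t. apply Hsep, Hk.
Qed.

Lemma balanced_of_levels n a U b :
  (1 <= n)%nat -> (forall k, (1 <= k <= 2 * n)%nat -> level_ok a U b k) ->
  (forall k, (k < 2 * n)%nat -> Nat.odd k = true -> gap_condition a U k) ->
  balanced X d Psi n a U.
Proof.
  intros Hn Hlev Hgap. right. split; [exact Hn|].
  assert (Hcell : forall k s, (1 <= k <= 2 * n)%nat -> inI a k s ->
            open X d (U s) /\ (exists x, U s x) /\ diam_le X d (U s) (b k) /\
            ((2 <= k)%nat -> subset X (closure X d (U s)) (U (removelast s)))).
  { intros k s Hk. apply (Hlev k Hk). }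
  split; [intros k Hk; apply (Hlev k Hk)|].
  split; [intros k s Hk Hs; split; apply (Hcell k s Hk Hs)|].
  exists b. split; [intros k Hk; apply (Hlev k Hk)|].
  split; [apply (Hlev 1%nat); lia|].
  split; [intros k Hk; apply (Hlev k); lia|].
  split; [intros k s Hk Hs; apply (Hcell k s); auto; lia|].
  split; [intros k s Hk Hs; apply (Hcell k s Hk Hs)|].
  split; [intros k s t Hk; apply (Hlev k Hk)|].
  intros k i j Hk Hodd. apply Hgap; auto.
Qed.

Section Agreement.
Variables (a a' : nat -> nat) (U U' : list nat -> X -> Prop) (b b' : nat -> R) (N : nat).
Hypothesis Ha : forall j, (j <= N)%nat -> a' j = a j.
Hypothesis HU : forall s, (length s <= N)%nat -> U' s = U s.
Hypothesis Hb : forall j, (j <= N)%nat -> b' j = b j.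

Lemma inI_agree k s : (k <= N)%nat -> inI a' k s <-> inI a k s.
Proof. intros Hk. split; apply inI_ext; intros j Hj; rewrite ?Ha; auto; lia. Qed.

Lemma level_ok_agree k : (k <= N)%nat -> level_ok a U b k -> level_ok a' U' b' k.
Proof.
  intros Hk [H1 [H2 [H3 [H4 [Hcell Hsep]]]]].
  assert (Hlen : forall s, inI a' k s -> length s = k) by (intros s [E _]; exact E).
  unfold level_ok. rewrite (Ha k Hk), (Hb k Hk), (prodA_ext a a') by (intros; apply Ha; lia).
  do 4 (split; [assumption|]). split.
  - intros s Hs.
    assert (Hparent : (length (removelast s) <= N)%nat)
      by (rewrite removelast_firstn_len, length_firstn, (Hlen s Hs); lia).
    rewrite (HU s), (HU (removelast s)) by (rewrite ?(Hlen s Hs); lia).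
    apply Hcell, inI_agree; auto.
  - intros s t Hs Ht Hst. rewrite !HU by (rewrite ?(Hlen s Hs), ?(Hlen t Ht); lia).
    apply Hsep; auto; apply inI_agree; auto.
Qed.

Lemma gap_condition_agree k :
  (1 <= k)%nat -> (S k <= N)%nat -> gap_condition a U k -> gap_condition a' U' k.
Proof.
  intros Hk1 Hk Hgap i j Hi Hj Hsi Hsj s t Hs Ht Hst.
  assert (Hlen : forall s, inI a' k s -> length s = k) by (intros s' [E _]; exact E).
  assert (HPhi : Phi Psi a' k = Phi Psi a k) by (apply Phi_ext; intros; apply Ha; lia).
  pose proof (Phi_length Psi a k Hk1).
  rewrite HPhi, !HU in Hsi, Hsj by (rewrite ?(Hlen i Hi), ?(Hlen j Hj); lia).
  rewrite Ha in Hs, Ht |- * by lia.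
  destruct (Hgap i j (proj1 (inI_agree k i ltac:(lia)) Hi) (proj1 (inI_agree k j ltac:(lia)) Hj)
               Hsi Hsj s t Hs Ht Hst) as [r [Hdiam Hdist]].
  exists r. rewrite !HU by (rewrite length_app, (Hlen i Hi); simpl; lia). split; [|exact Hdist].
  intros x y [u [Hu Hx]] [w [Hw Hy]].
  rewrite HU in Hx, Hy by (rewrite length_app, (Hlen j Hj); simpl; lia). apply Hdiam; eauto.
Qed.
End Agreement.
End Levels.

Definition extend {T : Type} (f : nat -> T) (N : nat) (v : T) (k : nat) : T :=
  if (k <=? N)%nat then f k else v.

Lemma extend_low {T : Type} (f : nat -> T) N v k : (k <= N)%nat -> extend f N v k = f k.
Proof. intros Hk. unfold extend. apply Nat.leb_le in Hk. rewrite Hk. reflexivity. Qed.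

Lemma extend_new {T : Type} (f : nat -> T) N v : extend f N v (S N) = v.
Proof.
  unfold extend. replace (S N <=? N)%nat with false by (symmetry; apply Nat.leb_gt; lia).
  reflexivity.
Qed.

Section NewLevel.
Variable X : Type.
Variable d : X -> X -> R.
Hypothesis Hm : is_metric X d.

Definition refine_cells (U : list nat -> X -> Prop) (N : nat) (c : list nat -> X) (r : R)
  (s : list nat) : X -> Prop :=
  if (length s <=? N)%nat then U s else ball X d (c s) r.

Lemma refine_low U N c r s : (length s <= N)%nat -> refine_cells U N c r s = U s.
Proof. intros Hs. unfold refine_cells. apply Nat.leb_le in Hs. rewrite Hs. reflexivity. Qed.

Lemma refine_new U N c r s : length s = S N -> refine_cells U N c r s = ball X d (c s) r.
Proof.
  intros Hs. unfold refine_cells. rewrite Hs.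
  replace (S N <=? N)%nat with false by (symmetry; apply Nat.leb_gt; lia). reflexivity.
Qed.

Lemma refined_index (a : nat -> nat) N A s :
  inI (extend a N A) (S N) s -> exists i u, s = i ++ [u] /\ inI a N i /\ (1 <= u <= A)%nat.
Proof.
  intros Hs. destruct (inI_split (extend a N A) N s Hs) as [i [u [-> [Hi Hu]]]].
  exists i, u. rewrite extend_new in Hu. split; [reflexivity|]. split; [|exact Hu].
  apply (inI_agree a (extend a N A) N); [intros; apply extend_low; lia | lia | exact Hi].
Qed.

Lemma refined_cell U N c r i u :
  length i = N -> refine_cells U N c r (i ++ [u]) = ball X d (c (i ++ [u])) r /\
                  refine_cells U N c r i = U i.
Proof.
  intros Hlen. rewrite refine_new, refine_low by (rewrite ?length_app; simpl; lia).
  split; reflexivity.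
Qed.

Variables (a : nat -> nat) (U : list nat -> X -> Prop) (b : nat -> R) (N A : nat).
Variables (c : list nat -> X) (r : R).
Hypothesis HA : (1 <= A)%nat.
Hypothesis HA_first : N = 0%nat -> (2 <= A)%nat.
Hypothesis HA_grow : (N * prodA a N <= A)%nat.
Hypothesis Hr : 0 < r.
Hypothesis Hlevel : (1 <= N)%nat -> level_ok X d a U b N.
Hypothesis Hr_small : (1 <= N)%nat -> 2 * r <= b N.
Hypothesis Hin_parent : forall i u, inI a N i -> (1 <= u <= A)%nat -> (1 <= N)%nat ->
  forall y, d (c (i ++ [u])) y <= r -> U i y.
Hypothesis Hsiblings : forall i u u', inI a N i -> (1 <= u <= A)%nat -> (1 <= u' <= A)%nat ->
  u <> u' -> 6 * r < d (c (i ++ [u])) (c (i ++ [u'])).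

Lemma level_ok_refine :
  level_ok X d (extend a N A) (refine_cells U N c r) (extend b N (2 * r)) (S N).
Proof.
  unfold level_ok. rewrite !extend_new.
  replace (S N - 1)%nat with N by lia.
  rewrite (prodA_ext a (extend a N A)) by (intros; apply extend_low; lia).
  split; [exact HA|]. split; [intros E; apply HA_first; lia|]. split; [exact HA_grow|].
  split; [lra|]. split.
  - intros s Hs. destruct (refined_index a N A s Hs) as [i [u [-> [Hi Hu]]]].
    destruct (refined_cell U N c r i u (proj1 Hi)) as [-> Hparent].
    split; [apply ball_open, Hm|]. split; [exists (c (i ++ [u])); apply ball_center; auto|].
    split; [apply ball_diam, Hm|].
    intros HN x Hx. rewrite removelast_last, Hparent.
    apply (Hin_parent i u Hi Hu ltac:(lia)), (closure_ball X d Hm), Hx.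
  - intros s t Hs Ht Hst.
    destruct (refined_index a N A s Hs) as [i [u [-> [Hi Hu]]]].
    destruct (refined_index a N A t Ht) as [j [w [-> [Hj Hw]]]].
    rewrite (proj1 (refined_cell U N c r i u (proj1 Hi))),
            (proj1 (refined_cell U N c r j w (proj1 Hj))).
    destruct (list_eq_dec Nat.eq_dec i j) as [<-|Hij].
    + apply ball_dist_gt; [exact Hm|].
      assert (Huw : u <> w) by (intros ->; apply Hst; reflexivity).
      pose proof (Hsiblings i u w Hi Hu Hw Huw). lra.
    + assert (HN : (1 <= N)%nat).
      { destruct N; [|lia]. exfalso. apply Hij.
        rewrite (inI_nil a i Hi), (inI_nil a j Hj). reflexivity. }
      destruct (Hlevel HN) as [_ [_ [_ [_ [_ Hsep]]]]].
      apply (dist_gt_mono X d (ball X d (c (i ++ [u])) r) (ball X d (c (j ++ [w])) r) (U i) (U j)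
                (2 * b N)).
      * intros y Hy. apply (Hin_parent i u Hi Hu HN). unfold ball in Hy. lra.
      * intros y Hy. apply (Hin_parent j w Hj Hw HN). unfold ball in Hy. lra.
      * apply Hsep; auto.
      * pose proof (Hr_small HN). lra.
Qed.
End NewLevel.

Section Constructions.
Variable X : Type.
Variable d : X -> X -> R.
Hypothesis Hm : is_metric X d.
Hypothesis Hperf : perfect X d.

Lemma children_centers (F : list nat -> Prop) (C : list nat -> X -> Prop)
  (p : list nat -> nat -> X) A rmax :
  listable F -> 0 < rmax -> (forall i, F i -> open X d (C i)) ->
  (forall i u, F i -> (1 <= u <= A)%nat -> C i (p i u)) ->
  exists (c : list nat -> X) r, 0 < r /\ r <= rmax /\ forall i, F i ->
    (forall u, (1 <= u <= A)%nat ->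
       d (p i u) (c (i ++ [u])) < rmax /\ forall y, d (c (i ++ [u])) y <= r -> C i y) /\
    (forall u u', (1 <= u <= A)%nat -> (1 <= u' <= A)%nat -> u <> u' ->
       8 * r < d (c (i ++ [u])) (c (i ++ [u']))).
Proof.
  intros HF Hrmax Hopen Hp.
  destruct (uniform_bound (fun q => F (fst q) /\ (1 <= snd q <= A)%nat)
              (fun q e => forall y, d (p (fst q) (snd q)) y < e -> C (fst q) y))
    as [eps [Heps Hroom]].
  - apply (listable_pair F (fun u => (1 <= u <= A)%nat)); [exact HF | apply listable_range].
  - intros q e e' _ He' Hq y Hy. apply Hq. lra.
  - intros [i u] [Fi Hu]. apply (Hopen i Fi), (Hp i u Fi Hu).
  - destruct (scattered_family X d Hm Hperf F p (Rmin rmax (eps / 2)) A HF)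
      as [f [sigma [Hsigma Hf]]]; [apply Rmin_pos; lra|].
    pose proof (Rmin_l rmax (eps / 2)). pose proof (Rmin_r rmax (eps / 2)).
    set (r := Rmin (sigma / 8) (Rmin (eps / 4) rmax)).
    assert (Hr : 0 < r /\ r <= sigma / 8 /\ r <= eps / 4 /\ r <= rmax).
    { unfold r. repeat split.
      - repeat apply Rmin_pos; lra.
      - apply Rmin_l.
      - eapply Rle_trans; [apply Rmin_r | apply Rmin_l].
      - eapply Rle_trans; [apply Rmin_r | apply Rmin_r]. }
    exists (fun t => f (removelast t) (last t 0%nat)), r.
    split; [tauto|]. split; [tauto|]. intros i Fi.
    destruct (Hf i Fi) as [Hnear Hsep]. split.
    + intros u Hu. cbv beta. rewrite removelast_last, last_last.
      pose proof (Hnear u Hu). split; [lra|].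
      intros y Hy. apply (Hroom (i, u) (conj Fi Hu)). simpl.
      pose proof (d_tri X d Hm (p i u) (f i u) y). lra.
    + intros u u' Hu Hu' Huu'. cbv beta. rewrite !removelast_last, !last_last.
      pose proof (Hsep u u' Hu Hu' Huu'). lra.
Qed.

Lemma two_scale_centers (F G : list nat -> Prop) (cc : list nat -> X) rho B :
  listable F -> 0 < rho ->
  exists (c : list nat -> X) sigma r,
    0 < sigma /\ 0 < r /\ r <= rho / 2 /\ r <= sigma / 16 /\ forall s, F s ->
    (forall v, (1 <= v <= B)%nat -> d (cc s) (c (s ++ [v])) < rho) /\
    (forall v v', (1 <= v <= B)%nat -> (1 <= v' <= B)%nat -> v <> v' ->
       8 * r < d (c (s ++ [v])) (c (s ++ [v']))) /\
    (G s -> forall v v', (1 <= v <= B)%nat -> (1 <= v' <= B)%nat -> v <> v' ->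
       sigma < d (c (s ++ [v])) (c (s ++ [v']))) /\
    (~ G s -> forall v, (1 <= v <= B)%nat -> d (cc s) (c (s ++ [v])) <= sigma / 16).
Proof.
  intros HF Hrho.
  destruct (scattered_family X d Hm Hperf F (fun s _ => cc s) rho B HF Hrho)
    as [f1 [sigma1 [Hsigma1 Hf1]]].
  destruct (scattered_family X d Hm Hperf F (fun s _ => cc s) (Rmin rho (sigma1 / 16)) B HF)
    as [f2 [sigma2 [Hsigma2 Hf2]]]; [apply Rmin_pos; lra|].
  pose proof (Rmin_l rho (sigma1 / 16)). pose proof (Rmin_r rho (sigma1 / 16)).
  set (r := Rmin (Rmin (sigma1 / 16) (sigma2 / 8)) (rho / 2)).
  assert (Hr : 0 < r /\ r <= sigma1 / 16 /\ r <= sigma2 / 8 /\ r <= rho / 2).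
  { unfold r. repeat split.
    - repeat apply Rmin_pos; lra.
    - eapply Rle_trans; [apply Rmin_l | apply Rmin_l].
    - eapply Rle_trans; [apply Rmin_l | apply Rmin_r].
    - apply Rmin_r. }
  set (c := fun t => if excluded_middle_informative (G (removelast t))
                     then f1 (removelast t) (last t 0%nat) else f2 (removelast t) (last t 0%nat)).
  exists c, sigma1, r. do 4 (split; [lra|]). intros s Fs.
  destruct (Hf1 s Fs) as [Hnear1 Hsep1]. destruct (Hf2 s Fs) as [Hnear2 Hsep2].
  destruct (excluded_middle_informative (G s)) as [Gs|nGs].
  - assert (Hc : forall v, c (s ++ [v]) = f1 s v).
    { intros v. unfold c. rewrite removelast_last, last_last.
      destruct (excluded_middle_informative (G s)); [reflexivity | contradiction]. }
    split; [intros v Hv; rewrite Hc; apply Hnear1, Hv|].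
    split; [intros v v' Hv Hv' Hvv'; rewrite !Hc; pose proof (Hsep1 v v' Hv Hv' Hvv'); lra|].
    split; [intros _ v v' Hv Hv' Hvv'; rewrite !Hc; auto | intros; contradiction].
  - assert (Hc : forall v, c (s ++ [v]) = f2 s v).
    { intros v. unfold c. rewrite removelast_last, last_last.
      destruct (excluded_middle_informative (G s)); [contradiction | reflexivity]. }
    split; [intros v Hv; rewrite Hc; pose proof (Hnear2 v Hv); lra|].
    split; [intros v v' Hv Hv' Hvv'; rewrite !Hc; pose proof (Hsep2 v v' Hv Hv' Hvv'); lra|].
    split; [intros; contradiction|]. intros _ v Hv. rewrite Hc. pose proof (Hnear2 v Hv). lra.
Qed.
End Constructions.

Lemma admissible_points {X : Type} (F : list nat -> Prop) (C : list nat -> X -> Prop)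
  (K : X -> Prop) (z : nat -> X) :
  inhabited X -> (forall i, F i -> exists x, K x /\ C i x) ->
  exists p : list nat -> nat -> X, forall i, F i -> forall u,
    K (p i u) /\ C i (p i u) /\ (K (z u) -> C i (z u) -> p i u = z u).
Proof.
  intros [x0] Hmeet.
  destruct (choice (fun i x => F i -> K x /\ C i x)) as [q Hq].
  { intros i. destruct (classic (F i)) as [Fi|nFi].
    - destruct (Hmeet i Fi) as [x Hx]. exists x. auto.
    - exists x0. contradiction. }
  exists (fun i u => if excluded_middle_informative (K (z u) /\ C i (z u)) then z u else q i).
  intros i Fi u. destruct (excluded_middle_informative (K (z u) /\ C i (z u))) as [Hz|Hz].
  - tauto.
  - split; [apply Hq, Fi|]. split; [apply Hq, Fi|]. tauto.
Qed.

Lemma hball_of_tracking {X : Type} (d : X -> X -> R) (K0 K : X -> Prop) (T : list nat -> Prop)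
  (W : list nat -> X -> Prop) rho eps :
  rho < eps ->
  (forall y, K y -> exists t, T t /\ W t y) ->
  (forall t, T t -> exists y, K y /\ W t y) ->
  (forall t, T t -> exists x, K0 x /\ forall y, W t y -> d x y <= rho) ->
  (forall x, K0 x -> exists t, T t /\ forall y, W t y -> d x y <= rho) ->
  hball X d K0 eps K.
Proof.
  intros Hrho Hcover Hmeet Htrack Hreach. exists rho. split; [exact Hrho|]. split.
  - intros x Hx. destruct (Hreach x Hx) as [t [Ht Hnear]].
    destruct (Hmeet t Ht) as [y [Hy Hty]]. exists y. split; auto.
  - intros y Hy. destruct (Hcover y Hy) as [t [Ht Hty]].
    destruct (Htrack t Ht) as [x [Hx Hnear]]. exists x. split; auto.
Qed.

Section Extension.
Variable X : Type.
Variable d : X -> X -> R.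
Hypothesis Hm : is_metric X d.
Variable Psi : nat -> list nat.
Variables (n : nat) (a : nat -> nat) (U : list nat -> X -> Prop) (b : nat -> R).
Local Notation N := (2 * n)%nat.

(* The cells of level 2n; for n = 0 the single cell of level 0 is the whole space. *)
Definition top_cell (i : list nat) (x : X) : Prop := n = 0%nat \/ U i x.

Lemma Upi_top_cells K : Upi X d n a U K ->
  (forall x, K x -> exists i, inI a N i /\ top_cell i x) /\
  (forall i, inI a N i -> exists x, K x /\ top_cell i x).
Proof.
  intros [[[x0 Kx0] _] [Hn0|[Hcover Hmeet]]]; split.
  - intros x _. exists []. split; [rewrite Hn0; split; [reflexivity | intros; lia] | left; exact Hn0].
  - intros i _. exists x0. split; [exact Kx0 | left; exact Hn0].
  - intros x Hx. destruct (Hcover x Hx) as [i [Hi Hix]]. exists i. split; [exact Hi | right; exact Hix].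
  - intros i Hi. destruct (Hmeet i Hi) as [x [Hx Hix]]. exists x. split; [exact Hx | right; exact Hix].
Qed.

Hypothesis Hb_top : 0 < b N.
Hypothesis Hlevels : forall k, (1 <= k <= N)%nat -> level_ok X d a U b k.
Hypothesis Hgaps : forall k, (k < N)%nat -> Nat.odd k = true -> gap_condition X d Psi a U k.

Variables (K0 : X -> Prop) (del : R).
Hypothesis Hdel : 0 < del.
Hypothesis HK0_cover : forall x, K0 x -> exists i, inI a N i /\ top_cell i x.

Section TwoNewLevels.
Variables (m A : nat) (z : nat -> X) (p : list nat -> nat -> X).
Variables (c1 : list nat -> X) (r1 rmax : R).

Definition a1 : nat -> nat := extend a N A.
Definition U1 : list nat -> X -> Prop := refine_cells X d U N c1 r1.
Definition b1 : nat -> R := extend b N (2 * r1).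

Definition inside_Phi (s : list nat) : Prop := subset X (U1 s) (U1 (Phi Psi a1 (S N))).

Definition B : nat := (S N * prodA a1 (S N) + 1)%nat.

Variables (c2 : list nat -> X) (sigma r2 : R).

Definition a' : nat -> nat := extend a1 (S N) B.
Definition U' : list nat -> X -> Prop := refine_cells X d U1 (S N) c2 r2.
Definition b' : nat -> R := extend b1 (S N) (2 * r2).

Lemma extension_consistent : consistent X n a U a' U'.
Proof.
  split.
  - intros k Hk. unfold a', a1. rewrite !extend_low by lia. reflexivity.
  - intros k s Hk [Hlen _] x. unfold U', U1. rewrite !refine_low by lia. reflexivity.
Qed.

Hypothesis Hz : forall j, (1 <= j <= m)%nat -> K0 (z j).
Hypothesis Hz_net : forall x, K0 x -> exists j, (1 <= j <= m)%nat /\ d (z j) x < del.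
Hypothesis Hp : forall i, inI a N i -> forall u,
  K0 (p i u) /\ top_cell i (p i u) /\ (K0 (z u) -> top_cell i (z u) -> p i u = z u).
Hypothesis HA : (m <= A)%nat /\ (2 <= A)%nat /\ (N * prodA a N <= A)%nat.
Hypothesis Hrmax : rmax <= del /\ 2 * rmax <= b N.
Hypothesis Hr1 : 0 < r1 /\ r1 <= rmax.
Hypothesis Hc1 : forall i, inI a N i ->
  (forall u, (1 <= u <= A)%nat ->
     d (p i u) (c1 (i ++ [u])) < rmax /\ forall y, d (c1 (i ++ [u])) y <= r1 -> top_cell i y) /\
  (forall u u', (1 <= u <= A)%nat -> (1 <= u' <= A)%nat -> u <> u' ->
     8 * r1 < d (c1 (i ++ [u])) (c1 (i ++ [u']))).
Hypothesis Hr2 : 0 < r2 /\ r2 <= r1 / 4 /\ r2 <= sigma / 16.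
Hypothesis Hc2 : forall s, inI a1 (S N) s ->
  (forall v, (1 <= v <= B)%nat -> d (c1 s) (c2 (s ++ [v])) < r1 / 2) /\
  (forall v v', (1 <= v <= B)%nat -> (1 <= v' <= B)%nat -> v <> v' ->
     8 * r2 < d (c2 (s ++ [v])) (c2 (s ++ [v']))) /\
  (inside_Phi s -> forall v v', (1 <= v <= B)%nat -> (1 <= v' <= B)%nat -> v <> v' ->
     sigma < d (c2 (s ++ [v])) (c2 (s ++ [v']))) /\
  (~ inside_Phi s -> forall v, (1 <= v <= B)%nat -> d (c1 s) (c2 (s ++ [v])) <= sigma / 16).

Lemma level1_ok : level_ok X d a1 U1 b1 (S N).
Proof.
  destruct HA as [_ [HA2 HAgrow]]. destruct Hr1 as [Hr1pos Hr1max]. destruct Hrmax as [_ Hrmaxb].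
  apply level_ok_refine; auto; try lia; try lra.
  - intros i u Hi Hu HN y Hy. destruct (proj2 (proj1 (Hc1 i Hi) u Hu) y Hy); [lia | assumption].
  - intros i u u' Hi Hu Hu' Huu'. pose proof (proj2 (Hc1 i Hi) u u' Hu Hu' Huu'). lra.
Qed.

Lemma level2_ok : level_ok X d a' U' b' (S (S N)).
Proof.
  destruct Hr2 as [Hr2pos [Hr2r1 _]].
  apply level_ok_refine; auto; unfold B; try lia.
  - intros _. apply level1_ok.
  - intros _. unfold b1. rewrite extend_new. lra.
  - intros s v Hs Hv _ y Hy. pose proof (proj1 (Hc2 s Hs) v Hv).
    unfold U1. rewrite refine_new by apply Hs. unfold ball.
    pose proof (d_tri X d Hm (c1 s) (c2 (s ++ [v])) y). lra.
  - intros s v v' Hs Hv Hv' Hvv'. pose proof (proj1 (proj2 (Hc2 s Hs)) v v' Hv Hv' Hvv'). lra.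
Qed.

Lemma top_gap : gap_condition X d Psi a' U' (S N).
Proof.
  intros i j Hi Hj Hsi Hsj s t Hs Ht Hst.
  assert (Hagree : forall k, (k <= S N)%nat -> a' k = a1 k) by (intros; apply extend_low; lia).
  assert (HU1 : forall w, (length w <= S N)%nat -> U' w = U1 w) by (intros; apply refine_low; lia).
  apply (inI_agree a1 a' (S N) Hagree) in Hi, Hj; [|lia..].
  rewrite (Phi_ext Psi a1 a') in Hsi, Hsj by exact Hagree.
  pose proof (Phi_length Psi a1 (S N) ltac:(lia)).
  rewrite !HU1 in Hsi, Hsj by (rewrite ?(proj1 Hi), ?(proj1 Hj); lia).
  unfold a' in Hs, Ht |- *. rewrite extend_new in Hs, Ht |- *.
  assert (Hchild : forall w v, inI a1 (S N) w -> U' (w ++ [v]) = ball X d (c2 (w ++ [v])) r2)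
    by (intros w v Hw; apply refine_new; rewrite length_app, (proj1 Hw); simpl; lia).
  destruct (Hc2 i Hi) as [_ [_ [Hspread _]]]. destruct (Hc2 j Hj) as [_ [_ [_ Hcluster]]].
  destruct Hr2 as [Hr2pos [_ Hr2sigma]].
  destruct (cluster_vs_gap X d Hm (fun u => c2 (j ++ [u])) B (c1 j) (c2 (i ++ [s])) (c2 (i ++ [t]))
              sigma r2 ltac:(lra) (Hspread Hsi s t Hs Ht Hst) (Hcluster Hsj)) as [Hdiam Hdist].
  exists (sigma / 4). rewrite !Hchild by exact Hi. split; [|exact Hdist].
  intros x y [u [Hu Hx]] [w [Hw Hy]]. rewrite Hchild in Hx, Hy by exact Hj.
  apply Hdiam; [exists u | exists w]; split; assumption.
Qed.

Lemma extension_balanced : balanced X d Psi (S n) a' U'.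
Proof.
  assert (Ha_low : forall k, (k <= N)%nat -> a' k = a k).
  { intros k Hk. unfold a', a1. rewrite !extend_low by lia. reflexivity. }
  assert (HU_low : forall s, (length s <= N)%nat -> U' s = U s)
    by (intros; unfold U', U1; rewrite !refine_low by lia; reflexivity).
  assert (Hb_low : forall k, (k <= N)%nat -> b' k = b k)
    by (intros; unfold b', b1; rewrite !extend_low by lia; reflexivity).
  apply (balanced_of_levels X d Psi (S n) a' U' b'); [lia| |].
  - intros k Hk. replace (2 * S n)%nat with (S (S N)) in Hk by lia.
    destruct (Nat.le_gt_cases k N) as [HkN|HkN].
    + apply (level_ok_agree X d a a' U U' b b' N Ha_low HU_low Hb_low k HkN), Hlevels. lia.
    + destruct (Nat.eq_dec k (S N)) as [->|HkN1]; [|replace k with (S (S N)) by lia; apply level2_ok].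
      apply (level_ok_agree X d a1 a' U1 U' b1 b' (S N)); [| | | lia | apply level1_ok].
      * intros j Hj. apply extend_low, Hj.
      * intros s Hs. apply refine_low, Hs.
      * intros j Hj. apply extend_low, Hj.
  - intros k Hk Hodd. replace (2 * S n)%nat with (S (S N)) in Hk by lia.
    destruct (Nat.le_gt_cases (S k) N) as [HkN|HkN].
    + apply (gap_condition_agree X d Psi a a' U U' N Ha_low HU_low k); [| exact HkN |].
      * destruct k; [discriminate | lia].
      * apply Hgaps; [lia | exact Hodd].
    + destruct (Nat.eq_dec k N) as [->|HkN1].
      * exfalso. rewrite Nat.odd_mul in Hodd. discriminate.
      * replace k with (S N) by lia. apply top_gap.
Qed.

Lemma extension_close K : Upi X d (S n) a' U' K -> hball X d K0 (4 * del) K.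
Proof.
  intros [_ [Hn0|[Hcover Hmeet]]]; [discriminate|].
  replace (2 * S n)%nat with (S (S N)) in Hcover, Hmeet by lia.
  destruct Hr1 as [Hr1pos Hr1max]. destruct Hrmax as [Hrmaxdel _].
  destruct Hr2 as [Hr2pos [Hr2r1 _]]. destruct HA as [HmA _].
  assert (Hcell : forall s v, inI a1 (S N) s -> U' (s ++ [v]) = ball X d (c2 (s ++ [v])) r2)
    by (intros s v Hs; apply refine_new; rewrite length_app, (proj1 Hs); simpl; lia).
  apply (hball_of_tracking d K0 K (inI a' (S (S N))) U' (3 * del)); auto; [lra| |].
  - intros t Ht.
    destruct (refined_index a1 (S N) B t Ht) as [s [v [-> [Hs Hv]]]].
    destruct (refined_index a N A s Hs) as [i [u [-> [Hi Hu]]]].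
    exists (p i u). split; [apply (Hp i Hi u)|]. intros y Hy.
    rewrite Hcell in Hy by exact Hs. unfold ball in Hy.
    pose proof (proj1 (proj1 (Hc1 i Hi) u Hu)). pose proof (proj1 (Hc2 (i ++ [u]) Hs) v Hv).
    pose proof (d_tri X d Hm (p i u) (c1 (i ++ [u])) y).
    pose proof (d_tri X d Hm (c1 (i ++ [u])) (c2 ((i ++ [u]) ++ [v])) y). lra.
  - intros x Hx. destruct (Hz_net x Hx) as [j [Hj Hjx]].
    destruct (HK0_cover (z j) (Hz j Hj)) as [i [Hi Hzi]].
    assert (Hs : inI a1 (S N) (i ++ [j])).
    { apply inI_snoc; [apply (inI_agree a a1 N); auto; intros; apply extend_low; lia|].
      unfold a1. rewrite extend_new. lia. }
    assert (Ht : inI a' (S (S N)) ((i ++ [j]) ++ [1%nat])).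
    { apply inI_snoc; [apply (inI_agree a1 a' (S N)); auto; intros; apply extend_low; lia|].
      unfold a'. rewrite extend_new. unfold B. lia. }
    exists ((i ++ [j]) ++ [1%nat]). split; [exact Ht|]. intros y Hy.
    rewrite Hcell in Hy by exact Hs. unfold ball in Hy.
    assert (Hpz : p i j = z j) by (apply (Hp i Hi j); auto; apply Hz, Hj).
    pose proof (proj1 (proj1 (Hc1 i Hi) j ltac:(lia))) as Hzc. rewrite Hpz in Hzc.
    pose proof (proj1 (Hc2 (i ++ [j]) Hs) 1%nat ltac:(unfold B; lia)).
    pose proof (d_tri X d Hm x (z j) y). pose proof (d_tri X d Hm (z j) (c1 (i ++ [j])) y).
    pose proof (d_tri X d Hm (c1 (i ++ [j])) (c2 ((i ++ [j]) ++ [1%nat])) y).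
    rewrite (d_sym X d Hm x (z j)) in *. lra.
Qed.
End TwoNewLevels.

Hypothesis Hperf : perfect X d.
Hypothesis Hinhabited : inhabited X.
Hypothesis HK0 : isK X d K0.
Hypothesis HK0_meet : forall i, inI a N i -> exists x, K0 x /\ top_cell i x.

Lemma top_cell_open i : inI a N i -> open X d (top_cell i).
Proof.
  intros Hi x Hx. destruct (Nat.eq_dec n 0) as [Hn0|Hn0].
  - exists 1. split; [lra|]. intros y _. left; exact Hn0.
  - destruct Hx as [|Hx]; [contradiction|].
    destruct (Hlevels N ltac:(lia)) as [_ [_ [_ [_ [Hcells _]]]]].
    destruct (proj1 (Hcells i Hi) x Hx) as [e [He Hball]].
    exists e. split; [exact He|]. intros y Hy. right. apply Hball, Hy.
Qed.

Lemma extension_exists :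
  exists (a_next : nat -> nat) (U_next : list nat -> X -> Prop),
    balanced X d Psi (S n) a_next U_next /\ consistent X n a U a_next U_next /\
    forall K, Upi X d (S n) a_next U_next K -> hball X d K0 (4 * del) K.
Proof.
  destruct (finite_net X d Hm K0 del HK0 Hdel) as [m [z [Hz Hz_net]]].
  destruct (admissible_points (inI a N) top_cell K0 z Hinhabited HK0_meet) as [p Hp].
  set (A := (m + N * prodA a N + 2)%nat).
  set (rmax := Rmin del (b N / 2)).
  assert (Hrmax : rmax <= del /\ 2 * rmax <= b N).
  { unfold rmax. pose proof (Rmin_l del (b N / 2)). pose proof (Rmin_r del (b N / 2)). lra. }
  destruct (children_centers X d Hm Hperf (inI a N) top_cell p A rmax (listable_inI a N)
              ltac:(apply Rmin_pos; lra) top_cell_open (fun i u Hi _ => proj1 (proj2 (Hp i Hi u))))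
    as [c1 [r1 [Hr1pos [Hr1max Hc1]]]].
  destruct (two_scale_centers X d Hm Hperf (inI (a1 A) (S N)) (inside_Phi A c1 r1) c1
              (r1 / 2) (B A) (listable_inI _ _) ltac:(lra))
    as [c2 [sigma [r2 [Hsigma [Hr2pos [Hr2rho [Hr2sigma Hc2]]]]]]].
  assert (HA : (m <= A)%nat /\ (2 <= A)%nat /\ (N * prodA a N <= A)%nat) by (unfold A; lia).
  assert (Hr1 : 0 < r1 /\ r1 <= rmax) by (split; assumption).
  assert (Hr2 : 0 < r2 /\ r2 <= r1 / 4 /\ r2 <= sigma / 16) by lra.
  exists (a' A), (U' c1 r1 c2 r2). split; [|split].
  - eapply extension_balanced; eassumption.
  - apply extension_consistent.
  - eapply extension_close; eassumption.
Qed.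
End Extension.

Theorem lemma4p10 (X : Type) (d : X -> X -> R)
  (Hmetric : is_metric X d)
  (Hpolish : separable X d /\
     exists d' : X -> X -> R, is_metric X d' /\ complete X d' /\
       (forall A : X -> Prop, open X d A <-> open X d' A))
  (Hne : inhabited X) (Hperf : perfect X d)
  (Psi : nat -> list nat)
  (HPsi_len : forall m, Nat.odd m = true -> (length (Psi m) <= m)%nat)
  (HPsi_onto : forall s : list nat, exists m, Nat.odd m = true /\ Psi m = s)
  (n : nat) (a : nat -> nat) (U : list nat -> X -> Prop)
  (Hpi : balanced X d Psi n a U)
  (V : (X -> Prop) -> Prop)
  (HVopen : Kopen X d V) (HVne : exists K, V K)
  (HVsub : forall K, V K -> Upi X d n a U K) :
  exists (a' : nat -> nat) (U' : list nat -> X -> Prop),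
    balanced X d Psi (S n) a' U' /\ consistent X n a U a' U' /\
    (forall K, Upi X d (S n) a' U' K -> V K).
Proof.
  destruct (balanced_levels X d Psi n a U Hpi) as [b [Hb_top [Hlevels Hgaps]]].
  destruct HVne as [K0 HK0V].
  destruct (HVopen K0 HK0V) as [HK0 [eps [Heps HepsV]]].
  destruct (Upi_top_cells X d n a U K0 (HVsub K0 HK0V)) as [HK0_cover HK0_meet].
  destruct (extension_exists X d Hmetric Psi n a U b Hb_top Hlevels Hgaps K0 (eps / 4)
              ltac:(lra) HK0_cover Hperf Hne HK0 HK0_meet) as [a' [U' [Hbal [Hcons Hclose]]]].
  exists a', U'. split; [exact Hbal|]. split; [exact Hcons|].
  intros K HK. apply HepsV; [apply HK|]. replace eps with (4 * (eps / 4)) by lra. apply Hclose, HK.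
Qed.
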